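(* For every positive integer $n$, $$\sum_{j=1}^{n}\csc^6\left(\frac{(2j-1)\pi}{4n+2}\right) = \frac{8(n+1)n(8n^4+16n^3+19n^2+11n+6)}{15}.$$ *)

From Stdlib Require Import Reals.
Open Scope R_scope.

Definition csc (x : R) : R := / sin x.

(* With s = sin^2 t, the identity cos((2n+5)t) = 2 cos(2t) cos((2n+3)t) - cos((2n+1)t)
   and cos(2t) = 1 - 2s give cos((2n+1)t) = P_n(s) cos t, where P_0 = 1,
   P_1 = 1 - 4X and P_(n+2) = (2 - 4X) P_(n+1) - P_n.  P_n has degree at most n and
   P_n(0) = 1.  For 0 <= i < n the angle theta_i = (2i+1)pi/(4n+2) lies in (0, pi/2)
   and (2n+1) theta_i is an odd multiple of pi/2, so the n distinct numbers
   sin^2 theta_i are the roots of P_n, and P_n = prod_i (1 - csc^2 theta_i X).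
   The required sum is then the third power sum of the csc^2 theta_i, which Newton's
   identities express through the coefficients of X, X^2, X^3 in P_n; the
   coefficient of X^k is (-4)^k C(n+k, 2k), and the stated polynomial follows. *)

From Stdlib Require Import Reals.
From mathcomp Require Import all_boot all_order all_algebra Rstruct ring lra.
Import Order.TTheory GRing.Theory Num.Theory.
Local Open Scope ring_scope.

Lemma nat_ind2 (P : nat -> Prop) :
  P 0 -> P 1 -> (forall n, P n -> P n.+1 -> P n.+2) -> forall n, P n.
Proof.
move=> P0 P1 PSS n; suff : P n /\ P n.+1 by case.
by elim: n => [|n [Pn Pn1]]; split=> //; apply: PSS.
Qed.

Section ReciprocalRootProduct.
Variable K : comNzRingType.
Implicit Types (y : K) (s : seq K).

Local Notation rprod s := (\prod_(y <- s) (1 - y *: 'X)).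

Lemma size_subZX (c : {poly K}) y :
  (size c <= 1)%N -> (size (c - y *: 'X)%R <= 2)%N.
Proof.
move=> size_c; rewrite (leq_trans (size_polyD _ _)) // geq_max size_polyN.
by rewrite (leq_trans size_c) // (leq_trans (size_scale_leq _ _)) // size_polyX.
Qed.

Lemma size_prod_1subZX s : (size (rprod s)%R <= (size s).+1)%N.
Proof.
elim: s => [|y s IHs]; first by rewrite big_nil size_poly1.
have size_y : (size (1 - y *: 'X)%R <= 2)%N by rewrite size_subZX ?size_poly1.
rewrite big_cons (leq_trans (size_polyMleq _ _)) // -subn1 leq_subLR add1n.
exact: leq_add size_y IHs.
Qed.

Lemma coef_1subZX_mul y (q : {poly K}) k :
  ((1 - y *: 'X) * q)`_k = q`_k - (if k is k'.+1 then y * q`_k' else 0).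
Proof.
by rewrite mulrBl mul1r coefB -scalerAl coefZ coefXM; case: k => [|k] /=; rewrite ?mulr0.
Qed.

Lemma coef0_prod_1subZX s : (rprod s)`_0 = 1.
Proof.
rewrite -horner_coef0 horner_prod big1 // => y _.
by rewrite hornerD hornerN hornerZ hornerX mulr0 subr0 hornerC.
Qed.

Lemma newton_sum_exp3 s :
  \sum_(y <- s) y ^+ 3 =
    - (rprod s)`_1 ^+ 3 + 3 * (rprod s)`_1 * (rprod s)`_2 - 3 * (rprod s)`_3.
Proof.
elim: s => [|y s IHs]; first by rewrite !big_nil polyseq1 /=; ring.
by rewrite !big_cons !coef_1subZX_mul coef0_prod_1subZX IHs; ring.
Qed.

End ReciprocalRootProduct.

Lemma poly_eq_prod_1subVX {F : fieldType} {p : {poly F}} {rs : seq F} :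
  (size p <= (size rs).+1)%N -> p.[0] = 1 -> all (root p) rs -> uniq rs ->
  p = \prod_(y <- [seq r^-1 | r <- rs]) (1 - y *: 'X).
Proof.
move=> size_p p0_eq1 rs_roots rs_uniq; set q := \prod_(y <- _) _.
have rs_neq0 : 0 \notin rs.
  by apply/negP => /(allP rs_roots); rewrite /root p0_eq1 oner_eq0.
have q_roots : all (root q) rs.
  apply/allP => r r_rs; rewrite /root /q big_map horner_prod (big_rem r) //= !hornerE.
  by rewrite mulVf ?subrr ?mul0r //; apply: contraNneq rs_neq0 => <-.
apply/eqP; rewrite -subr_eq0; apply/eqP/(@roots_geq_poly_eq0 _ _ (0 :: rs)).
- rewrite /= rootE !hornerE p0_eq1 horner_coef0 coef0_prod_1subZX subrr eqxx /=.
  apply/allP => r r_rs; rewrite rootE hornerD hornerN.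
  by rewrite (eqP (allP rs_roots r r_rs)) (eqP (allP q_roots r r_rs)) subrr.
- by rewrite /= rs_neq0.
- rewrite (leq_trans (size_polyD _ _)) // geq_max size_polyN size_p /=.
  by rewrite (leq_trans (size_prod_1subZX _ _)) ?size_map.
Qed.

Section OddCosPoly.
Variable K : comNzRingType.

Fixpoint odd_cos_poly n : {poly K} :=
  match n with
  | 0 => 1
  | 1 => 1 - 4 *: 'X
  | (m.+1 as k).+1 => (2 - 4 *: 'X) * odd_cos_poly k - odd_cos_poly m
  end.

Lemma odd_cos_polySS n :
  odd_cos_poly n.+2 = (2 - 4 *: 'X) * odd_cos_poly n.+1 - odd_cos_poly n.
Proof. by []. Qed.

Lemma size_odd_cos_poly n : (size (odd_cos_poly n) <= n.+1)%N.
Proof.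
have size_c : (size (2 - 4 *: 'X : {poly K})%R <= 2)%N.
  by rewrite size_subZX // -polyC_natr size_polyC_leq1.
elim/nat_ind2: n => [| |n IHn IHn1]; first by rewrite size_poly1.
  by rewrite size_subZX ?size_poly1.
rewrite odd_cos_polySS (leq_trans (size_polyD _ _)) // geq_max size_polyN.
rewrite (leq_trans IHn (leqW (leqnSn _))) andbT.
rewrite (leq_trans (size_polyMleq _ _)) // -subn1 leq_subLR add1n.
exact: leq_add size_c IHn1.
Qed.

Lemma horner_odd_cos_poly1 x : (odd_cos_poly 1).[x] = 1 - 4 * x.
Proof. by rewrite !hornerE. Qed.

Lemma horner_odd_cos_polySS n x :
  (odd_cos_poly n.+2).[x] = (2 - 4 * x) * (odd_cos_poly n.+1).[x] - (odd_cos_poly n).[x].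
Proof. by rewrite odd_cos_polySS !hornerE. Qed.

Lemma horner0_odd_cos_poly n : (odd_cos_poly n).[0] = 1.
Proof.
elim/nat_ind2: n => [| |n IHn IHn1]; first by rewrite hornerE.
  by rewrite horner_odd_cos_poly1 mulr0 subr0.
by rewrite horner_odd_cos_polySS IHn IHn1 mulr0 subr0 mulr1; ring.
Qed.

Lemma coefS_odd_cos_polySS n k :
  (odd_cos_poly n.+2)`_k.+1 =
    2 * (odd_cos_poly n.+1)`_k.+1 - 4 * (odd_cos_poly n.+1)`_k - (odd_cos_poly n)`_k.+1.
Proof.
by rewrite odd_cos_polySS mulrBl !coefB -scalerAl coefZ coefXM -polyC_natr coefCM.
Qed.

End OddCosPoly.

Section OddCosPolyCoef.
Variable F : numFieldType.
Local Notation P := (odd_cos_poly F).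

Lemma coef1_odd_cos_poly n : (P n)`_1 = - 2 * n%:R * (n%:R + 1).
Proof.
elim/nat_ind2: n => [| |n IHn IHn1]; first by rewrite coef1 mulr0 mul0r.
  by rewrite coefB coefZ coef1 coefX /=; ring.
by rewrite coefS_odd_cos_polySS IHn IHn1 -horner_coef0 horner0_odd_cos_poly; ring.
Qed.

Lemma coef2_odd_cos_poly n :
  (P n)`_2 = 2 * (n%:R - 1) * n%:R * (n%:R + 1) * (n%:R + 2) / 3.
Proof.
elim/nat_ind2: n => [| |n IHn IHn1]; first by rewrite coef1 !(mulr0, mul0r).
  by rewrite coefB coefZ coef1 coefX /=; field.
by rewrite coefS_odd_cos_polySS IHn IHn1 coef1_odd_cos_poly; field.
Qed.

Lemma coef3_odd_cos_poly n :
  (P n)`_3 =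
    - 4 * (n%:R - 2) * (n%:R - 1) * n%:R * (n%:R + 1) * (n%:R + 2) * (n%:R + 3) / 45.
Proof.
elim/nat_ind2: n => [| |n IHn IHn1]; first by rewrite coef1 !(mulr0, mul0r).
  by rewrite coefB coefZ coef1 coefX /=; field.
by rewrite coefS_odd_cos_polySS IHn IHn1 coef2_odd_cos_poly; field.
Qed.

End OddCosPolyCoef.

(* Arguments of sin and cos are read in Stdlib's R_scope.  Its operations are
   convertible, but not syntactically equal, to the ring operations of R, so they
   must be rewritten before ring, field or lra can be used. *)
Ltac Rstdlib_to_ring :=
  rewrite ?RplusE ?RminusE ?RmultE ?RoppE ?RinvE ?RdivE ?RpowE ?R0E ?R1E ?IZRposE ?INRE;
  repeat match goal with |- context [nat_of_pos ?p] =>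
    let k := eval compute in (nat_of_pos p) in change (nat_of_pos p) with k end.

Lemma cosD_cosB (u w : R) : cos (u + w) = 2 * cos u * cos w - cos (u - w).
Proof. by rewrite cos_plus cos_minus; Rstdlib_to_ring; ring. Qed.

Lemma cos_twice (t : R) : cos (t + t) = 1 - 2 * sin t ^+ 2.
Proof. by have := cos_2a_sin t; Rstdlib_to_ring; rewrite mulr_natl mulr2n => ->; ring. Qed.

Lemma sin_twice (t : R) : sin (t + t) = 2 * sin t * cos t.
Proof. by have := sin_2a t; Rstdlib_to_ring; rewrite mulr_natl mulr2n => ->; ring. Qed.

Lemma horner_odd_cos_poly_sin2 n t :
  (odd_cos_poly R n).[sin t ^+ 2] * cos t = cos ((2 * INR n + 1) * t).
Proof.
elim/nat_ind2: n => [| |n IHn IHn1].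
- by Rstdlib_to_ring; rewrite hornerC mul1r mulr0 add0r mul1r.
- Rstdlib_to_ring; have -> : (2 * 1%:R + 1) * t = (t + t) + t by ring.
  by rewrite cosD cos_twice sin_twice horner_odd_cos_poly1; ring.
- move: IHn IHn1; Rstdlib_to_ring => IHn IHn1.
  have -> : (2 * n.+2%:R + 1) * t = (2 * n.+1%:R + 1) * t + (t + t) by ring.
  rewrite cosD_cosB; Rstdlib_to_ring.
  have -> : (2 * n.+1%:R + 1) * t - (t + t) = (2 * n%:R + 1) * t by ring.
  by rewrite cos_twice -IHn -IHn1 horner_odd_cos_polySS; ring.
Qed.

Definition theta (n i : nat) : R := (2 * INR i.+1 - 1) * PI / (4 * INR n + 2).

Lemma PI2_gt0 : 0 < PI / 2.
Proof. by rewrite divr_gt0 //; apply/RltP/PI_RGT_0. Qed.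

Lemma thetaE n i : theta n i = (2 * i%:R + 1) * (PI / 2) / (2 * n%:R + 1).
Proof.
have n_ge0 := ler0n R n.
by rewrite /theta; Rstdlib_to_ring; field; rewrite !gt_eqF //; lra.
Qed.

Lemma theta_gt0 n i : 0 < theta n i.
Proof.
have n_ge0 := ler0n R n; have i_ge0 := ler0n R i.
by rewrite thetaE; apply: divr_gt0; [apply: mulr_gt0; last exact: PI2_gt0|]; lra.
Qed.

Lemma theta_lt_PI2 {n i} : (i < n)%N -> theta n i < PI / 2.
Proof.
rewrite -(ler_nat R) -natr1 => lt_in; have n_ge0 := ler0n R n.
rewrite thetaE ltr_pdivrMr; last lra.
by rewrite [X in _ < X]mulrC ltr_pM2r ?PI2_gt0 //; lra.
Qed.

Lemma theta_increasing n {i j} : (i < j)%N -> theta n i < theta n j.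
Proof.
rewrite -(ltr_nat R) => lt_ij; have n_ge0 := ler0n R n.
rewrite !thetaE ltr_pM2r ?invr_gt0; last lra.
by rewrite ltr_pM2r ?PI2_gt0 //; lra.
Qed.

Lemma cos_theta n i : cos ((2 * INR n + 1) * theta n i) = 0.
Proof.
apply: cos_eq_0_1; exists (Z.of_nat i); rewrite -INR_IZR_INZ thetaE.
have n_ge0 := ler0n R n.
by Rstdlib_to_ring; field; rewrite gt_eqF //; lra.
Qed.

Lemma cos_theta_gt0 {n i} : (i < n)%N -> 0 < cos (theta n i).
Proof.
move=> lt_in; have := theta_gt0 n i; have := theta_lt_PI2 lt_in; have := PI2_gt0.
by move=> *; apply/RltP/cos_gt_0; apply/RltP; Rstdlib_to_ring; lra.
Qed.

Lemma sin_theta_gt0 {n i} : (i < n)%N -> 0 < sin (theta n i).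
Proof.
move=> lt_in; have := theta_gt0 n i; have := theta_lt_PI2 lt_in; have := PI2_gt0.
by move=> *; apply/RltP/sin_gt_0; apply/RltP; Rstdlib_to_ring; lra.
Qed.

Lemma sin2_theta_increasing {n i j} :
  (i < j)%N -> (j < n)%N -> sin (theta n i) ^+ 2 < sin (theta n j) ^+ 2.
Proof.
move=> lt_ij lt_jn; have lt_in := ltn_trans lt_ij lt_jn.
rewrite ltrXn2r ?ltW ?(sin_theta_gt0 lt_in) //.
have := theta_gt0 n i; have := theta_lt_PI2 lt_in; have := theta_gt0 n j.
have := theta_lt_PI2 lt_jn; have := theta_increasing n lt_ij; have := PI2_gt0.
by move=> *; apply/RltP/sin_increasing_1; (apply/RleP || apply/RltP); Rstdlib_to_ring; lra.
Qed.

Lemma root_odd_cos_poly_sin2_theta {n i} :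
  (i < n)%N -> root (odd_cos_poly R n) (sin (theta n i) ^+ 2).
Proof.
move=> lt_in; have := horner_odd_cos_poly_sin2 n (theta n i).
by rewrite cos_theta => /eqP; rewrite mulf_eq0 (gt_eqF (cos_theta_gt0 lt_in)) orbF.
Qed.

Lemma sum_csc6_theta n :
  \sum_(0 <= i < n) csc (theta n i) ^+ 6 =
    - (odd_cos_poly R n)`_1 ^+ 3 + 3 * (odd_cos_poly R n)`_1 * (odd_cos_poly R n)`_2
    - 3 * (odd_cos_poly R n)`_3.
Proof.
set rs := [seq sin (theta n i) ^+ 2 | i <- iota 0 n].
have rs_roots : all (root (odd_cos_poly R n)) rs.
  apply/allP => _ /mapP[i + ->]; rewrite mem_iota => /andP[_ lt_in].
  exact: root_odd_cos_poly_sin2_theta.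
have rs_uniq : uniq rs.
  rewrite /rs map_inj_in_uniq ?iota_uniq // => i j.
  rewrite !mem_iota !add0n => /andP[_ lt_in] /andP[_ lt_jn].
  case: (ltngtP i j) => // [lt_ij | lt_ji] /eqP.
    by rewrite lt_eqF ?sin2_theta_increasing.
  by rewrite gt_eqF ?sin2_theta_increasing.
have size_P : (size (odd_cos_poly R n) <= (size rs).+1)%N.
  by rewrite size_map size_iota size_odd_cos_poly.
rewrite (poly_eq_prod_1subVX size_P (horner0_odd_cos_poly _ n) rs_roots rs_uniq).
rewrite -newton_sum_exp3 !big_map /index_iota subn0; apply: eq_bigr => i _.
by rewrite /csc RinvE !exprVn -exprM.
Qed.

(* In the statement [^] is Stdlib's [pow], not MathComp's integer power. *)
Local Open Scope R_scope.

Theorem mainTheorem20 (n : nat) (hn : (1 <= n)%coq_nat) :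
  sum_f_R0 (fun i => (csc ((2 * INR (S i) - 1) * PI / (4 * INR n + 2))) ^ 6) (n - 1)
  = 8 * (INR n + 1) * INR n
      * (8 * INR n ^ 4 + 16 * INR n ^ 3 + 19 * INR n ^ 2 + 11 * INR n + 6) / 15.
Proof.
rewrite sum_f_R0E subn1 prednK; last exact/ssrnat.ltP.
under eq_bigr do rewrite RpowE.
rewrite sum_csc6_theta coef1_odd_cos_poly coef2_odd_cos_poly coef3_odd_cos_poly.
by Rstdlib_to_ring; field.
Qed.
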